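(* Let $\mathcal{C}=\{C_{\theta,t}:\theta\in\Theta,\ t\in\mathcal{T}\}$ be a class of prediction sets $C_{\theta,t}:\mathcal{X}\to 2^{\mathcal{Y}}$ with $\mathcal{T}\subset\mathbb{R}$, such that for each $\theta$ the family is nested ($t\le t'$ implies $C_{\theta,t}(x)\subseteq C_{\theta,t'}(x)$ for all $x$). Let $\ell_{\mathrm{eff}}(C;(x,y))$ be an efficiency loss that is non-decreasing in the set argument. Let $D_{\mathrm{cal}}=\{(x_i,y_i)\}_{i=1}^{n_{\mathrm{cal}}}$ be i.i.d. from a distribution of $(X,Y)$, let $\alpha\in(0,1)$, $\varepsilon_0\ge 0$, and let $(\hat\theta,\hat t)$ be a solution of $$\min_{\theta\in\Theta,t\in\mathcal{T}} \hat L_{\mathrm{eff}}(C_{\theta,t}) \quad\text{s.t.}\quad \hat L_{\mathrm{coverage}}(C_{\theta,t})\le \alpha+\varepsilon_0,$$ where $\hat L_{\mathrm{eff}}(C)=\frac1{n_{\mathrm{cal}}}\sum_i \ell_{\mathrm{eff}}(C;(x_i,y_i))$ and $\hat L_{\mathrm{coverage}}(C)=\frac1{n_{\mathrm{cal}}}\sum_i\mathbf{1}\{y_i\notin C(x_i)\}$. Let $L_{\mathrm{eff}}(C)=\mathbb{E}[\ell_{\mathrm{eff}}(C;(X,Y))]$, $L_{\mathrm{coverage}}(C)=\mathbb{P}(Y\notin C(X))$, and $$\varepsilon_{\mathrm{eff}}=\sup_{\theta\in\Theta,t\in\mathcal{T}}|\hat L_{\mathrm{eff}}(C_{\theta,t})-L_{\mathrm{eff}}(C_{\theta,t})|,\qquad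 \varepsilon_{\mathrm{coverage}}=\sup_{\theta\in\Theta,t\in\mathcal{T}}|\hat L_{\mathrm{coverage}}(C_{\theta,t})-L_{\mathrm{coverage}}(C_{\theta,t})|.$$ Then: (a) $L_{\mathrm{coverage}}(C_{\hat\theta,\hat t})\le \alpha+\varepsilon_0+\varepsilon_{\mathrm{coverage}}$; (b) if $\varepsilon_0\ge\varepsilon_{\mathrm{coverage}}$, then $$L_{\mathrm{eff}}(C_{\hat\theta,\hat t})\le \inf_{(\theta,t)\in\Theta\times\mathcal{T}:\ L_{\mathrm{coverage}}(C_{\theta,t})\le\alpha} L_{\mathrm{eff}}(C_{\theta,t})+2\varepsilon_{\mathrm{eff}}.$$
   Context: A prediction set is a map $C:\mathcal{X}\to 2^{\mathcal{Y}}$; $(X,Y)$ denotes a test example drawn from the same distribution as the calibration data. *)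

From HB Require Import structures.
From mathcomp Require Import all_boot all_order all_algebra.
From mathcomp Require Import all_classical all_reals all_analysis.
Set Implicit Arguments. Unset Strict Implicit. Unset Printing Implicit Defensive.
Import Order.TTheory GRing.Theory Num.Theory.
Local Open Scope classical_set_scope.
Local Open Scope ring_scope.

Section ConformalDefs.
Context {R : realType} {dX dY : measure_display}
        {X : measurableType dX} {Y : measurableType dY}.

Definition predset := X -> set Y.

Definition nested {Theta : Type} (C : Theta -> R -> predset) (Tset : set R) :=
  forall th t t', t \in Tset -> t' \in Tset -> t <= t' ->
    forall x, C th t x `<=` C th t' x.

Definition loss_monotone (l : predset -> X * Y -> R) :=
  forall (C C' : predset), (forall x, C x `<=` C' x) ->
    forall z, l C z <= l C' z.

Definition emp_eff (n : nat) (D : 'I_n -> X * Y)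
  (l : predset -> X * Y -> R) (C : predset) : R :=
  n%:R^-1 * \sum_(i < n) l C (D i).

Definition emp_cov (n : nat) (D : 'I_n -> X * Y) (C : predset) : R :=
  n%:R^-1 * \sum_(i < n) ((D i).2 \notin C (D i).1)%:R.

Definition pop_eff (P : probability (X * Y)%type R)
  (l : predset -> X * Y -> R) (C : predset) : \bar R :=
  (\int[P]_z (l C z)%:E)%E.

Definition pop_cov (P : probability (X * Y)%type R) (C : predset) : \bar R :=
  P [set z | ~ C z.1 z.2].

Definition eps_eff {Theta : Type} (C : Theta -> R -> predset) (Tset : set R)
  (n : nat) (D : 'I_n -> X * Y) (P : probability (X * Y)%type R)
  (l : predset -> X * Y -> R) : \bar R :=
  ereal_sup [set e | exists th t, Tset t /\
     e = `| (emp_eff D l (C th t))%:E - pop_eff P l (C th t) |%E].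

Definition eps_cov {Theta : Type} (C : Theta -> R -> predset) (Tset : set R)
  (n : nat) (D : 'I_n -> X * Y) (P : probability (X * Y)%type R) : \bar R :=
  ereal_sup [set e | exists th t, Tset t /\
     e = `| (emp_cov D (C th t))%:E - pop_cov P (C th t) |%E].

Definition oracle_eff {Theta : Type} (C : Theta -> R -> predset) (Tset : set R)
  (P : probability (X * Y)%type R) (l : predset -> X * Y -> R) (alpha : R) : \bar R :=
  ereal_inf [set e | exists th t, [/\ Tset t, (pop_cov P (C th t) <= alpha%:E)%E &
     e = pop_eff P l (C th t)]].

End ConformalDefs.

From HB Require Import structures.
From mathcomp Require Import all_boot all_order all_algebra.
From mathcomp Require Import all_classical all_reals all_analysis.
From mathcomp Require Import lra.
Set Implicit Arguments. Unset Strict Implicit. Unset Printing Implicit Defensive.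
Import Order.TTheory GRing.Theory Num.Theory.
Local Open Scope classical_set_scope.
Local Open Scope ring_scope.

(* The uniform deviations let one pass between empirical and population risks
   of any member of the class at the cost of one eps.  (a) The population
   miscoverage of the solution exceeds its empirical miscoverage, which is at
   most alpha + eps0, by at most eps_cov.  (b) If eps0 >= eps_cov, every pair
   with population miscoverage at most alpha is feasible for the empirical
   problem, so L_eff(hat) <= Lhat_eff(hat) + eps_eff <= Lhat_eff(th, t) + eps_eff
   <= L_eff(th, t) + 2 eps_eff, and it remains to take the infimum. *)

Section ExtendedRealBounds.
Context {R : realType}.
Import DualAddTheory.
Local Open Scope ereal_scope.

Lemma lee_EFin_dist (x : R) (y e : \bar R) : y \is a fin_num ->
  `|x%:E - y| <= e -> y <= x%:E + e /\ x%:E <= y + e.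
Proof.
move=> /fineK <-; rewrite -EFinB abse_EFin.
case: e => [e| |] /=; last by rewrite leeNy_eq.
- by rewrite -!EFinD !lee_fin ler_norml => /andP[? ?]; split; lra.
- by split; rewrite addey ?leey.
Qed.

Lemma lb_ereal_inf_dadde (S : set (\bar R)) (x e : \bar R) :
  (forall y, S y -> x <= y + e) -> x <= (ereal_inf S + e)%dE.
Proof.
case: e => [e| |] xS.
- rewrite dual_addeE_def ?fin_num_adde_defl // -leeBlDr //.
  by apply/ereal_infP => y Sy; rewrite leeBlDr // xS.
- by rewrite daddey leey.
- have [[y Sy]|noS] := pselect (exists y, S y).
    by move: (xS y Sy); rewrite addeNy leeNy_eq => /eqP ->; rewrite leNye.
  suff -> : S = set0 by rewrite ereal_inf0 leey.
  by apply/seteqP; split => // y Sy; apply: noS; exists y.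
Qed.

End ExtendedRealBounds.

Section ConstrainedRiskMinimization.
Context {R : realType} {dX dY : measure_display}
        {X : measurableType dX} {Y : measurableType dY}.
Variables (P : probability (X * Y)%type R) (Theta : Type) (Tset : set R)
          (C : Theta -> R -> X -> set Y) (l : (X -> set Y) -> X * Y -> R)
          (n : nat) (D : 'I_n -> X * Y).
Local Open Scope ereal_scope.

Lemma pop_cov_fin_num (A : X -> set Y) :
  measurable [set z | ~ A z.1 z.2] -> pop_cov P A \is a fin_num.
Proof.
move=> mA; rewrite ge0_fin_numE ?measure_ge0 //.
by apply: (le_lt_trans (probability_le1 P mA)); rewrite ltry.
Qed.

Hypothesis measurable_miscov :
  forall th t, Tset t -> measurable [set z : X * Y | ~ C th t z.1 z.2].
Hypothesis integrable_loss :
  forall th t, Tset t -> P.-integrable setT (fun z => (l (C th t) z)%:E).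

Lemma cov_within_eps_cov th t : Tset t ->
  pop_cov P (C th t) <= (emp_cov D (C th t))%:E + eps_cov C Tset D P /\
  (emp_cov D (C th t))%:E <= pop_cov P (C th t) + eps_cov C Tset D P.
Proof.
move=> Tt; apply: lee_EFin_dist.
  exact: pop_cov_fin_num (measurable_miscov th Tt).
by apply: ereal_sup_ubound; exists th, t.
Qed.

Lemma eff_within_eps_eff th t : Tset t ->
  pop_eff P l (C th t) <= (emp_eff D l (C th t))%:E + eps_eff C Tset D P l /\
  (emp_eff D l (C th t))%:E <= pop_eff P l (C th t) + eps_eff C Tset D P l.
Proof.
move=> Tt; apply: lee_EFin_dist.
  exact: (integrable_fin_num measurableT (integrable_loss th Tt)).
by apply: ereal_sup_ubound; exists th, t.
Qed.

Variables (alpha eps0 : R) (th_hat : Theta) (t_hat : R).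
Hypothesis Tt_hat : Tset t_hat.
Hypothesis feasible_hat : (emp_cov D (C th_hat t_hat) <= alpha + eps0)%R.
Hypothesis optimal_hat : forall th t, Tset t ->
  (emp_cov D (C th t) <= alpha + eps0)%R ->
  (emp_eff D l (C th_hat t_hat) <= emp_eff D l (C th t))%R.

Lemma pop_cov_hat_le :
  pop_cov P (C th_hat t_hat) <= alpha%:E + eps0%:E + eps_cov C Tset D P.
Proof.
have [le_pop _] := cov_within_eps_cov th_hat Tt_hat.
by apply: (le_trans le_pop); rewrite -EFinD leeD2r // lee_fin.
Qed.

Lemma pop_feasible_emp_feasible th t : Tset t ->
  eps_cov C Tset D P <= eps0%:E -> pop_cov P (C th t) <= alpha%:E ->
  (emp_cov D (C th t) <= alpha + eps0)%R.
Proof.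
move=> Tt le_eps le_pop; have [_ le_emp] := cov_within_eps_cov th Tt.
by rewrite -lee_fin EFinD (le_trans le_emp) // leeD.
Qed.

Lemma pop_eff_hat_le : eps_cov C Tset D P <= eps0%:E ->
  pop_eff P l (C th_hat t_hat)
    <= (oracle_eff C Tset P l alpha + 2%:E * eps_eff C Tset D P l)%dE.
Proof.
move=> le_eps; rewrite mule_natl mule2n.
apply: lb_ereal_inf_dadde => _ [th [t [Tt le_pop ->]]].
have [le_pop_hat _] := eff_within_eps_eff th_hat Tt_hat.
have [_ le_emp] := eff_within_eps_eff th Tt.
apply: (le_trans le_pop_hat); rewrite addeA leeD2r // (le_trans _ le_emp) //.
by rewrite lee_fin optimal_hat // pop_feasible_emp_feasible.
Qed.

End ConstrainedRiskMinimization.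

Theorem proposition2 (R : realType) (dX dY : measure_display)
  (X : measurableType dX) (Y : measurableType dY)
  (P : probability (X * Y)%type R)
  (Theta : Type) (Tset : set R) (C : Theta -> R -> X -> set Y)
  (l : (X -> set Y) -> X * Y -> R)
  (n : nat) (D : 'I_n -> X * Y) (alpha eps0 : R)
  (th_hat : Theta) (t_hat : R) :
  (0 < n)%N ->
  nested C Tset ->
  loss_monotone l ->
  (forall th t, Tset t -> measurable [set z : X * Y | ~ C th t z.1 z.2]) ->
  (forall th t, Tset t -> P.-integrable setT (fun z => (l (C th t) z)%:E)) ->
  0 < alpha < 1 ->
  0 <= eps0 ->
  (* (th_hat, t_hat) solves the empirical constrained problem *)
  Tset t_hat ->
  emp_cov D (C th_hat t_hat) <= alpha + eps0 ->
  (forall th t, Tset t -> emp_cov D (C th t) <= alpha + eps0 ->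
     emp_eff D l (C th_hat t_hat) <= emp_eff D l (C th t)) ->
  (* (a) *)
  (pop_cov P (C th_hat t_hat)
     <= alpha%:E + eps0%:E + eps_cov C Tset D P)%E /\
  (* (b) *)
  ((eps_cov C Tset D P <= eps0%:E)%E ->
   (pop_eff P l (C th_hat t_hat)
     <= dual_adde (oracle_eff C Tset P l alpha) (2%:E * eps_eff C Tset D P l))%E).
Proof.
move=> _ _ _ meas int _ _ Tt feasible optimal; split.
- exact (pop_cov_hat_le P meas Tt feasible).
- exact (pop_eff_hat_le meas int Tt optimal).
Qed.
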